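(* Let $\mathcal{Q}_{\mathrm{con}}$ be the set of isomorphism classes of finite connected quandles, regarded as an abelian monoid under cartesian product, and let $\mathbb{Z}\{\mathcal{Q}_{\mathrm{con}}\}$ be its monoid ring. There is an isomorphism of rings $$\mathrm{B}(\mathcal{Q})\cong\mathbb{Z}\{\mathcal{Q}_{\mathrm{con}}\}$$ between the Burnside ring of finite quandles and this monoid ring, under which $b(Q)$ corresponds to $[Q]$ for every finite connected quandle $Q$.
   Context: A rack is a set $R$ with a binary operation $\rhd$ such that every left multiplication $\ell_a\colon b\mapsto a\rhd b$ is a bijection and $a\rhd(b\rhd c)=(a\rhd b)\rhd(a\rhd c)$ for all $a,b,c$; a quandle is a rack with $a\rhd a=a$ for all $a$. Products of quandles are cartesian products with componentwise operation; the singleton quandle is the unit. The inner automorphism group $\mathrm{Inn}(R)$ is the subgroup of the symmetric group on $R$ generated by all $\ell_a$; a rack is connected if it is non-empty and $\mathrm{Inn}(R)$ acts transitively on $R$. The product of two connected quandles is connected, so $\mathcal{Q}_{\mathrm{con}}$ is an abelian monoid. A subrack of $R$ is a subset $S$ with $\ell_s(S)=S$ for all $s\in S$; a decomposition of $R$ into $S$ and $T$ means $S,T$ are disjoint subracks (possibly empty) with $S\cup T=R$. The Burnside ring of finite quandles $\mathrm{B}(\mathcal{Q})$ is the abelian group generated by symbols $b(Q)$, one for each finite quandle $Q$, subject to $b(Q_1)=b(Q_2)$ whenever $Q_1\cong Q_2$ and $b(Q)=b(S)+b(T)$ whenever $Q$ decomposes into $S$ and $T$; it is a commutative ring with $b(Q)b(Q')=b(Q\times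 Q')$. *)

From HB Require Import structures.
From mathcomp Require Import all_boot all_order all_algebra all_fingroup.
Set Implicit Arguments. Unset Strict Implicit. Unset Printing Implicit Defensive.
Import GRing.Theory.

(* A finite magma: a finite carrier with a binary operation (a |> b = mop a b). *)
Record magma := Magma { mcar : finType; mop : mcar -> mcar -> mcar }.

Definition is_rack (R : magma) : Prop :=
  (forall a : mcar R, bijective (mop a)) /\
  (forall a b c : mcar R, mop a (mop b c) = mop (mop a b) (mop a c)).

Definition is_quandle (R : magma) : Prop :=
  is_rack R /\ (forall a : mcar R, mop a a = a).

Definition inn (R : magma) : {set {perm mcar R}} :=
  <<[set p : {perm mcar R} | [exists a : mcar R, [forall x, p x == mop a x]]]>>%g.

Definition connected (R : magma) : Prop :=
  (0 < #|mcar R|)%N /\ (forall x y : mcar R, exists2 g, g \in inn R & g x = y).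

Definition is_conquandle (R : magma) : Prop := is_quandle R /\ connected R.

Definition iso (R S : magma) : Prop :=
  exists f : mcar R -> mcar S, bijective f /\
    (forall a b, f (mop a b) = mop (f a) (f b)).

Definition mprod (R S : magma) : magma :=
  @Magma _ (fun a b : (mcar R * mcar S)%type => (mop a.1 b.1, mop a.2 b.2)).

Definition munit : magma := @Magma _ (fun _ _ : unit => tt).

Definition subrack (R : magma) (A : {set mcar R}) : Prop :=
  forall s, s \in A -> (mop s) @: A = A.

Definition msub (R : magma) (A : {set mcar R}) : magma :=
  @Magma _ (fun x y : {x : mcar R | x \in A} => insubd x (mop (val x) (val y))).

Definition decomp (R S T : magma) : Prop :=
  exists A : {set mcar R}, [/\ subrack A, subrack (~: A), S = msub A & T = msub (~: A)].

(* Formal Z-linear combinations  sum_i z_i [Q_i]  *)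
Definition fsum := seq (int * magma).

Fixpoint fvalid (P : magma -> Prop) (x : fsum) : Prop :=
  match x with [::] => True | t :: x' => P t.2 /\ fvalid P x' end.

Definition fmul (x y : fsum) : fsum :=
  [seq ((t.1 * s.1)%R, mprod t.2 s.2) | t <- x, s <- y].

Definition fone : fsum := [:: (1%R, munit)].

(* Equality in the abelian group generated by symbols [Q] (Q with P Q),
   subject to [Q] = [Q'] for Q ~= Q' and to the extra relations
   [Q] = [S] + [T] whenever D Q S T.  Formal sums are lists; the
   rules swap/cons/cat/merge/zero present the free abelian group. *)
Inductive fs_eq (P : magma -> Prop) (D : magma -> magma -> magma -> Prop)
  : fsum -> fsum -> Prop :=
| fs_refl x : fs_eq P D x x
| fs_sym x y : fs_eq P D x y -> fs_eq P D y x
| fs_trans x y w : fs_eq P D x y -> fs_eq P D y w -> fs_eq P D x w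
| fs_cons t x y : fs_eq P D x y -> fs_eq P D (t :: x) (t :: y)
| fs_cat x y w : fs_eq P D x y -> fs_eq P D (x ++ w) (y ++ w)
| fs_swap t s x : fs_eq P D (t :: s :: x) (s :: t :: x)
| fs_merge z w Q x : P Q -> fs_eq P D ((z, Q) :: (w, Q) :: x) (((z + w)%R, Q) :: x)
| fs_zero Q x : P Q -> fs_eq P D ((0%R, Q) :: x) x
| fs_iso z Q Q' x : P Q -> P Q' -> iso Q Q' -> fs_eq P D ((z, Q) :: x) ((z, Q') :: x)
| fs_rel z Q S T x : P Q -> P S -> P T -> D Q S T ->
    fs_eq P D ((z, Q) :: x) ((z, S) :: (z, T) :: x).

(* Burnside ring B(Q): formal sums of finite quandles modulo isomorphism and
   decompositions. *)
Definition beq : fsum -> fsum -> Prop := fs_eq is_quandle decomp.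

(* Monoid ring Z{Q_con}: formal sums of finite connected quandles modulo
   isomorphism (i.e. free abelian group on iso classes). *)
Definition zeq : fsum -> fsum -> Prop := fs_eq is_conquandle (fun _ _ _ => False).

From HB Require Import structures.
From mathcomp Require Import all_boot all_order all_algebra all_fingroup.
From mathcomp Require Import zify.
From Stdlib Require Import Classical ClassicalEpsilon.
Set Implicit Arguments. Unset Strict Implicit. Unset Printing Implicit Defensive.
Import GRing.Theory.

(* Every finite quandle Q that is neither empty nor connected splits along a nontrivial
   Inn(Q)-stable subset A into the subquandles A and ~: A, so by induction on the size each
   b(Q) is a sum of classes of connected quandles; the empty quandle splits into two copies
   of itself, so b(empty) = 0.  Such a representation is unique: for a connected C the number
   of embeddings of C into Q is additive along decompositions, since the image of C lies in a
   single part, and these "marks" separate formal sums of connected quandles (compare the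
   largest summands).  Choosing the connected representative therefore gives the ring
   isomorphism; it is multiplicative because products with a fixed quandle preserve
   decompositions. *)

(** * Formal sums *)

Lemma fvalid_sub (P1 P2 : magma -> Prop) L :
  (forall Q, P1 Q -> P2 Q) -> fvalid P1 L -> fvalid P2 L.
Proof. by move=> P12; elim: L => [|t L IH] //= [? ?]; split; [exact: P12 | exact: IH]. Qed.

Lemma fvalid_and (P1 P2 : magma -> Prop) L :
  fvalid P1 L -> fvalid P2 L -> fvalid (fun Q => P1 Q /\ P2 Q) L.
Proof. by elim: L => [|t L IH] //= [? ?] [? ?]; split; [split | exact: IH]. Qed.

Lemma fvalid_cat P L1 L2 : fvalid P (L1 ++ L2) <-> fvalid P L1 /\ fvalid P L2.
Proof.
elim: L1 => [|t L IH] /=; first by split => // -[].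
by rewrite IH; split => [[? [? ?]]|[[? ?] ?]].
Qed.

Lemma fvalid_cat_cons P L1 t L2 : fvalid P (L1 ++ t :: L2) <-> P t.2 /\ fvalid P (L1 ++ L2).
Proof. by rewrite !fvalid_cat /=; tauto. Qed.

Lemma fvalid_filter (P1 P2 : magma -> Prop) (p : pred (int * magma)) L :
  (forall t, p t -> P1 t.2 -> P2 t.2) -> fvalid P1 L -> fvalid P2 (filter p L).
Proof.
move=> P12; elim: L => [|t L IH] //= [? ?]; case: ifP => pt /=; last exact: IH.
by split; [exact: P12 | exact: IH].
Qed.

Lemma fvalid_fmul (P : magma -> Prop) x y :
  (forall Q R, P Q -> P R -> P (mprod Q R)) ->
  fvalid P x -> fvalid P y -> fvalid P (fmul x y).
Proof.
move=> Pprod; elim: x => [|[z Q] x IH] //= [PQ vx] vy; apply/fvalid_cat; split; last exact: IH.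
by elim: y vy {IH vx} => [|[w R] y IHy] //= [PR vy]; split; [exact: Pprod | exact: IHy].
Qed.

Definition fopp (L : fsum) : fsum := [seq ((- t.1)%R, t.2) | t <- L].

Lemma fvalid_fopp P L : fvalid P L -> fvalid P (fopp L).
Proof. by elim: L => [|t L IH] //= [? ?]; split => //; exact: IH. Qed.

Lemma fsum_largest (L : fsum) : 0 < size L ->
  exists L1 t L2, L = L1 ++ t :: L2 /\ fvalid (fun Q => #|mcar Q| <= #|mcar t.2|) L.
Proof.
elim: L => [//|s L IH] _; have [->|/IH [L1 [t [L2 [-> Lt]]]]] : L = [::] \/ 0 < size L.
- by case: L {IH}; [left | right].
- by exists [::], s, [::].
have [st|ts] := leqP #|mcar s.2| #|mcar t.2|; first by exists (s :: L1), t, L2.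
exists [::], s, (L1 ++ t :: L2); split => //=; split => //.
by apply: fvalid_sub Lt => Q /leq_trans; apply; exact: ltnW.
Qed.

Section FormalSums.
Context {P : magma -> Prop} {D : magma -> magma -> magma -> Prop}.
Local Notation E := (fs_eq P D).

Lemma fs_catl w x y : E x y -> E (w ++ x) (w ++ y).
Proof. by elim: w => [|t w IH] //= xy; apply/fs_cons/IH. Qed.

Lemma fs_cat2 x x' y y' : E x x' -> E y y' -> E (x ++ y) (x' ++ y').
Proof. by move=> xx' yy'; apply: fs_trans (fs_cat _ xx') _; exact: fs_catl. Qed.

Lemma fs_cat_cons u t v : E (u ++ t :: v) (t :: u ++ v).
Proof.
elim: u => [|s u IH] /=; first exact: fs_refl.
by apply: fs_trans (fs_cons s IH) _; exact: fs_swap.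
Qed.

Lemma fs_catC u v : E (u ++ v) (v ++ u).
Proof.
elim: u => [|t u IH] /=; first by rewrite cats0; exact: fs_refl.
by apply: fs_trans (fs_cons t IH) _; apply: fs_sym; exact: fs_cat_cons.
Qed.

Lemma fs_catCA u v w : E (u ++ v ++ w) (v ++ u ++ w).
Proof. by rewrite !catA; apply: fs_cat; exact: fs_catC. Qed.

Lemma fs_filterC (p : pred (int * magma)) L : E L (filter p L ++ filter (predC p) L).
Proof.
elim: L => [|t L IH] /=; first exact: fs_refl.
case: (p t) => /=; first exact: fs_cons.
by apply: fs_trans (fs_cons t IH) _; apply: fs_sym; exact: fs_cat_cons.
Qed.

Lemma fs_foppl L : fvalid P L -> E (fopp L ++ L) [::].
Proof.
elim: L => [|[z Q] L IH] /=; first by move=> _; exact: fs_refl.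
move=> [PQ vL].
apply: fs_trans (fs_cons _ (fs_cat_cons _ _ _)) _.
apply: fs_trans (fs_merge D _ _ _ PQ) _; rewrite addNr.
by apply: fs_trans (fs_zero D _ PQ) _; exact: IH.
Qed.

Lemma fs_merge_iso Q0 L : P Q0 -> fvalid (fun Q => P Q /\ iso Q Q0) L ->
  E L [:: ((\sum_(t <- L) t.1)%R, Q0)].
Proof.
move=> PQ0; elim: L => [|[z Q] L IH] /=.
  by move=> _; rewrite big_nil; apply: fs_sym; exact: fs_zero.
move=> [[PQ QQ0] vL]; rewrite big_cons.
apply: fs_trans (fs_cons _ (IH vL)) _; apply: fs_trans (fs_iso D _ _ PQ PQ0 QQ0) _.
exact: fs_merge.
Qed.

(* [Q] = [S] + [T] = [Q] + [Q], hence [Q] = 0. *)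
Lemma fs_rel_self z Q S T x : P Q -> P S -> P T -> D Q S T -> iso S Q -> iso T Q ->
  E ((z, Q) :: x) x.
Proof.
move=> PQ PS PT DQ SQ TQ.
have dup y : E ((z, Q) :: y) ((z, Q) :: (z, Q) :: y).
  apply: fs_trans (fs_rel z y PQ PS PT DQ) _.
  by apply: fs_trans (fs_iso D _ _ PS PQ SQ) _; apply/fs_cons/(fs_iso D _ _ PT PQ TQ).
apply: fs_trans (fs_cons _ (fs_sym (fs_zero D x PQ))) _.
rewrite -(subrr z); apply: fs_trans (fs_cons _ (fs_sym (fs_merge D _ _ _ PQ))) _.
apply: fs_trans (fs_sym (dup _)) _; apply: fs_trans (fs_merge D _ _ _ PQ) _.
by rewrite subrr; exact: fs_zero.
Qed.

Lemma fs_flatten_map (h : int * magma -> fsum) :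
  (forall z w Q y, P Q -> E (h (z, Q) ++ h (w, Q) ++ y) (h ((z + w)%R, Q) ++ y)) ->
  (forall Q y, P Q -> E (h (0%R, Q) ++ y) y) ->
  (forall z Q Q', P Q -> P Q' -> iso Q Q' -> E (h (z, Q)) (h (z, Q'))) ->
  (forall z Q S T, P Q -> P S -> P T -> D Q S T -> E (h (z, Q)) (h (z, S) ++ h (z, T))) ->
  forall x y, E x y -> E (flatten (map h x)) (flatten (map h y)).
Proof.
move=> hmerge hzero hiso hrel x y; elim=> {x y} /=.
- by move=> x; exact: fs_refl.
- by move=> x y _; exact: fs_sym.
- by move=> x y w _ xy _; exact: fs_trans xy.
- by move=> t x y _; exact: fs_catl.
- by move=> x y w _ xy; rewrite !map_cat !flatten_cat; exact: fs_cat.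
- by move=> t s x; exact: fs_catCA.
- by move=> z w Q x PQ; exact: hmerge.
- by move=> Q x PQ; exact: hzero.
- by move=> z Q Q' x PQ PQ' QQ'; apply: fs_cat; exact: hiso.
by move=> z Q S T x PQ PS PT DQ; rewrite catA; apply: fs_cat; exact: hrel.
Qed.

End FormalSums.

Lemma fs_eq_mono (P P' : magma -> Prop) (D D' : magma -> magma -> magma -> Prop) x y :
  (forall Q, P Q -> P' Q) -> (forall Q S T, D Q S T -> D' Q S T) ->
  fs_eq P D x y -> fs_eq P' D' x y.
Proof.
move=> PP' DD'; elim=> {x y}; try by move=> *; constructor; auto.
by move=> x y w _ xy _; exact: fs_trans.
Qed.

(** * Stable subsets, connectedness and decompositions *)

Definition lstable (R : magma) (A : {set mcar R}) := forall a x, x \in A -> mop a x \in A.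

Lemma connected_lstable_mem R (A : {set mcar R}) x y :
  connected R -> lstable A -> x \in A -> y \in A.
Proof.
move=> [_ trans] stA xA; have [g gI <-] := trans x y.
have innN : inn R \subset 'N(A | 'P)%g.
  rewrite gen_subG; apply/subsetP => p; rewrite inE => /existsP [a /forallP pa].
  by rewrite !inE; apply/subsetP => u uA; rewrite inE /= apermE (eqP (pa u)); exact: stA.
by rewrite -[g x]/(aperm x g) (astabs_act x (subsetP innN g gI)).
Qed.

Lemma lstable_connected R : is_rack R -> 0 < #|mcar R| ->
  (forall A : {set mcar R}, lstable A -> A = set0 \/ A = setT) -> connected R.
Proof.
move=> [lbij _] R0 trivA; split => // x y.
pose lperm a := perm (bij_inj (lbij a)).
have lperm_inn a : lperm a \in inn R.
  by apply: mem_gen; rewrite inE; apply/existsP; exists a; apply/forallP => u; rewrite permE.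
have stO : lstable (orbit 'P (inn R) x).
  move=> a _ /orbitP [g gI <-].
  have -> : mop a ('P%act x g) = 'P%act x (g * lperm a)%g by rewrite /= !apermE permM permE.
  by apply: mem_orbit; rewrite /inn groupM.
case: (trivA _ stO) => [O0|OT]; first by move: (orbit_refl 'P (inn R) x); rewrite O0 inE.
have /orbitP [g gI <-] : y \in orbit 'P (inn R) x by rewrite OT inE.
by exists g.
Qed.

Lemma rack_mprod R S : is_rack R -> is_rack S -> is_rack (mprod R S).
Proof.
move=> [bijR distR] [bijS distS]; split => [a|a b c]; last by rewrite /= distR distS.
apply: injF_bij => -[x1 x2] [y1 y2] /= [] /(bij_inj (bijR a.1)) -> /(bij_inj (bijS a.2)) ->.
by [].
Qed.

Lemma quandle_mprod R S : is_quandle R -> is_quandle S -> is_quandle (mprod R S).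
Proof.
by move=> [rR idR] [rS idS]; split=> [|[a b]]; [exact: rack_mprod | rewrite /= idR idS].
Qed.

Lemma quandle_munit : is_quandle munit.
Proof. by split=> [|[]]; split=> // a; exists id => -[]. Qed.

Lemma connected_munit : connected munit.
Proof. by split=> [|[] []]; [rewrite card_unit | exists 1%g; rewrite ?group1 ?perm1]. Qed.

Lemma connected_mprod R S : is_quandle R -> is_quandle S ->
  connected R -> connected S -> connected (mprod R S).
Proof.
move=> [rR idR] [rS idS] cR cS; apply: lstable_connected; first exact: rack_mprod.
  by rewrite card_prod muln_gt0; case: cR => ->; case: cS.
move=> A stA; have [->|[[x x'] xA]] := set_0Vmem A; [by left | right].
have row y : (y, x') \in A.
  have stRow : lstable [set y | (y, x') \in A].
    by move=> a z; rewrite !inE => /(stA (a, x')); rewrite /= idS.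
  by have := @connected_lstable_mem _ _ x y cR stRow; rewrite !inE; apply.
apply/setP => -[y y']; rewrite inE.
have stCol : lstable [set u | (y, u) \in A].
  by move=> a u; rewrite !inE => /(stA (y, a)); rewrite /= idR.
by have := @connected_lstable_mem _ _ x' y' cS stCol; rewrite !inE; apply.
Qed.

Lemma conquandle_mprod R S :
  is_conquandle R -> is_conquandle S -> is_conquandle (mprod R S).
Proof. by move=> [qR cR] [qS cS]; split; [exact: quandle_mprod | exact: connected_mprod]. Qed.

Lemma fvalid_conquandle_quandle L : fvalid is_conquandle L -> fvalid is_quandle L.
Proof. by apply: fvalid_sub => Q []. Qed.

Lemma lstable_imset R (A : {set mcar R}) : is_rack R -> lstable A -> forall a, mop a @: A = A.
Proof.
move=> [lbij _] stA a; apply/eqP; rewrite eqEcard card_imset ?leqnn ?andbT; last exact: bij_inj.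
by apply/subsetP => _ /imsetP [x xA ->]; exact: stA.
Qed.

Lemma lstableC R (A : {set mcar R}) : is_rack R -> lstable A -> lstable (~: A).
Proof.
move=> rR stA a x; rewrite !inE; apply: contra => axA.
by rewrite -(mem_imset _ _ (bij_inj (rR.1 a))) lstable_imset.
Qed.

Lemma msub_val R (A : {set mcar R}) (x y : mcar (msub A)) :
  lstable A -> val (mop x y) = mop (val x) (val y).
Proof. by move=> stA; rewrite /= insubdK //; apply: stA; exact: valP. Qed.

Lemma quandle_msub R (A : {set mcar R}) : is_quandle R -> lstable A -> is_quandle (msub A).
Proof.
move=> [[lbij dist] idem] stA; split; first split.
- move=> a; apply: injF_bij => u v /(congr1 val); rewrite !msub_val //.
  by move/(bij_inj (lbij _))/val_inj.
- by move=> a b c; apply: val_inj; rewrite !msub_val // dist.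
by move=> a; apply: val_inj; rewrite msub_val // idem.
Qed.

Lemma card_msub R (A : {set mcar R}) : #|mcar (msub A)| = #|A|.
Proof. by rewrite card_sig; apply: eq_card => x; rewrite !inE. Qed.

Lemma decomp_msub R (A : {set mcar R}) :
  is_rack R -> lstable A -> decomp R (msub A) (msub (~: A)).
Proof.
move=> rR stA; exists A; split=> // s _; apply: lstable_imset => //; exact: lstableC.
Qed.

Lemma decompP R S T : is_rack R -> decomp R S T ->
  exists A : {set mcar R}, [/\ lstable A, S = msub A & T = msub (~: A)].
Proof.
move=> [lbij _] [A [subA subC -> ->]]; exists A; split=> // a x xA.
have [aA|aNA] := boolP (a \in A); first by rewrite -(subA a aA) imset_f.
have aC : a \in ~: A by rewrite inE.
apply: contraT; rewrite -in_setC -(subC a aC) (mem_imset _ _ (bij_inj (lbij a))).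
by rewrite inE xA.
Qed.

Lemma decomp_quandle R S T : is_quandle R -> decomp R S T -> is_quandle S /\ is_quandle T.
Proof.
move=> qR /(decompP qR.1) [A [stA -> ->]].
by split; apply: quandle_msub => //; exact: lstableC qR.1 stA.
Qed.

Lemma iso_refl R : iso R R.
Proof. by exists id; split=> //; exists id. Qed.

Lemma iso_sym R S : iso R S -> iso S R.
Proof.
move=> [f [[g fK gK] fhom]]; exists g; split; first by exists f.
by move=> a b; apply: (can_inj fK); rewrite fhom !gK.
Qed.

Lemma iso_trans R S T : iso R S -> iso S T -> iso R T.
Proof.
move=> [f [[f' fK f'K] fhom]] [g [[g' gK g'K] ghom]]; exists (g \o f); split.
  by exists (f' \o g') => x /=; rewrite ?gK ?fK ?g'K ?f'K.
by move=> a b /=; rewrite fhom ghom.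
Qed.

Lemma iso_empty R S : #|mcar R| = 0 -> #|mcar S| = 0 -> iso R S.
Proof.
have void (T : finType) : #|T| = 0 -> T -> False by move/card0_eq => T0 x; have := T0 x.
move=> /void R0 /void S0; exists (fun x => False_rect _ (R0 x)); split.
  by exists (fun y => False_rect _ (S0 y)) => [x|y]; [case: (R0 x) | case: (S0 y)].
by move=> a; case: (R0 a).
Qed.

Lemma iso_mprodl Q Q' B : iso Q Q' -> iso (mprod Q B) (mprod Q' B).
Proof.
move=> [f [[g fK gK] fhom]]; exists (fun u : mcar Q * mcar B => (f u.1, u.2)); split.
  by exists (fun u : mcar Q' * mcar B => (g u.1, u.2)) => -[a b] /=; rewrite ?fK ?gK.
by move=> [a b] [c d] /=; rewrite fhom.
Qed.

Lemma iso_mprodC Q B : iso (mprod Q B) (mprod B Q).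
Proof.
exists (fun u : mcar Q * mcar B => (u.2, u.1)); split=> [|[? ?] [? ?] //].
by exists (fun u : mcar B * mcar Q => (u.2, u.1)) => -[].
Qed.

Lemma iso_mprodr Q Q' B : iso Q Q' -> iso (mprod B Q) (mprod B Q').
Proof.
move=> QQ'; apply: iso_trans (iso_mprodC _ _) _.
by apply: iso_trans (iso_mprodl _ QQ') _; exact: iso_mprodC.
Qed.

Lemma lstable_preim_fst Q B (A : {set mcar Q}) :
  lstable A -> lstable (@fst _ _ @^-1: A : {set mcar (mprod Q B)}).
Proof. by move=> stA a u; rewrite !inE; exact: stA. Qed.

Lemma iso_msub_preim_fst Q B (A : {set mcar Q}) : lstable A ->
  iso (mprod (msub A) B) (msub (@fst _ _ @^-1: A : {set mcar (mprod Q B)})).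
Proof.
set A' := _ @^-1: A => stA; have stA' := lstable_preim_fst (B := B) stA.
have mem1 (x : mcar (@msub (mprod Q B) A')) : (val x).1 \in A by move: (valP x); rewrite inE.
have mem2 (y : mcar (mprod (msub A) B)) : (val y.1, y.2) \in A' by rewrite inE; exact: valP.
exists (fun y => Sub (val y.1, y.2) (mem2 y)); split.
  exists (fun x => (Sub (val x).1 (mem1 x), (val x).2)) => [[a b]|x].
    by congr pair; apply: val_inj.
  by apply: val_inj => /=; case: (val x).
move=> y y'; apply: val_inj; rewrite [RHS]msub_val // !SubK.
by congr pair; exact: msub_val.
Qed.

(** * Embeddings and marks *)

Definition embeddings (C Q : magma) : {set {ffun mcar C -> mcar Q}} :=
  [set f : {ffun mcar C -> mcar Q} |
    injectiveb f && [forall a, forall b, f (mop a b) == mop (f a) (f b)]].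

Definition maps_into C Q (A : {set mcar Q}) : {set {ffun mcar C -> mcar Q}} :=
  [set f : {ffun mcar C -> mcar Q} | [forall c, f c \in A]].

Lemma embeddingsP C Q (f : {ffun mcar C -> mcar Q}) :
  f \in embeddings C Q <-> injective f /\ forall a b, f (mop a b) = mop (f a) (f b).
Proof.
rewrite inE; split => [/andP [/injectiveP finj /'forall_forallP fhom]|[finj fhom]].
  by split=> // a b; apply/eqP.
by apply/andP; split; [exact/injectiveP | apply/'forall_forallP => a b; rewrite fhom].
Qed.

Lemma card_embeddings_gt0 C : 0 < #|embeddings C C|.
Proof.
by apply/card_gt0P; exists [ffun x => x]; apply/embeddingsP; split=> [a b|a b]; rewrite !ffunE.
Qed.

Lemma embeddings_iso C Q (f : {ffun mcar C -> mcar Q}) :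
  f \in embeddings C Q -> #|mcar Q| <= #|mcar C| -> iso C Q.
Proof. by move=> /embeddingsP [finj fhom] QC; exists f; split=> //; exact: inj_card_bij. Qed.

Lemma card_embeddings_iso C Q Q' : iso Q Q' -> #|embeddings C Q| = #|embeddings C Q'|.
Proof.
have le R S : iso R S -> #|embeddings C R| <= #|embeddings C S|.
  move=> [p [pbij phom]].
  pose push (f : {ffun mcar C -> mcar R}) : {ffun mcar C -> mcar S} := [ffun c => p (f c)].
  have push_inj : injective push.
    by move=> f g /ffunP fg; apply/ffunP => c; move: (fg c); rewrite !ffunE => /(bij_inj pbij).
  rewrite -(card_imset _ push_inj); apply/subset_leq_card/subsetP.
  move=> _ /imsetP [f /embeddingsP [finj fhom] ->].
  apply/embeddingsP; split=> [a b|a b]; rewrite !ffunE; last by rewrite fhom phom.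
  by move/(bij_inj pbij)/finj.
by move=> QQ'; apply/eqP; rewrite eqn_leq !le //; exact: iso_sym.
Qed.

Lemma card_embeddings_msub C Q (A : {set mcar Q}) : lstable A ->
  #|embeddings C (msub A)| = #|embeddings C Q :&: maps_into C A|.
Proof.
move=> stA; pose incl (g : {ffun mcar C -> mcar (msub A)}) : {ffun mcar C -> mcar Q} :=
  [ffun c => val (g c)].
have incl_inj : injective incl.
  by move=> f g /ffunP fg; apply/ffunP => c; move: (fg c); rewrite !ffunE => /val_inj.
rewrite -(card_imset _ incl_inj); congr #|pred_of_set _|; apply/setP => f; apply/imsetP/setIP.
  move=> [g /embeddingsP [ginj ghom] ->]; split.
    apply/embeddingsP; split=> [a b|a b]; rewrite !ffunE; first by move/val_inj/ginj.
    by rewrite ghom msub_val.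
  by rewrite /maps_into inE; apply/forallP => c; rewrite ffunE; exact: valP.
move=> [/embeddingsP [finj fhom]]; rewrite /maps_into inE => /forallP fA.
exists [ffun c => Sub (f c) (fA c) : mcar (msub A)]; last by apply/ffunP => c; rewrite !ffunE.
apply/embeddingsP; split=> [a b|a b]; rewrite !ffunE; first by move=> [] /finj.
by apply: val_inj; rewrite msub_val //= fhom.
Qed.

(* The preimage of A under an embedding of a connected C is stable, hence empty or all of C. *)
Lemma card_embeddings_split C Q (A : {set mcar Q}) : connected C -> is_rack Q -> lstable A ->
  #|embeddings C Q| = #|embeddings C (msub A)| + #|embeddings C (msub (~: A))|.
Proof.
move=> cC rQ stA; rewrite !card_embeddings_msub //; last exact: lstableC.
rewrite -(cardsID (maps_into C A) (embeddings C Q)); congr (_ + _).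
apply: eq_card => f; rewrite in_setI in_setD andbC; apply: andb_id2l => /embeddingsP [_ fhom].
have [c0 _] : exists c0 : mcar C, c0 \in mcar C by apply/card_gt0P; case: cC.
have stB : lstable [set c | f c \in A] by move=> a c; rewrite !inE fhom; exact: stA.
rewrite /maps_into !inE; have [allA|notall] := boolP [forall c, f c \in A] => /=.
  by apply/esym/negbTE/negP => /forallP /(_ c0); rewrite inE (forallP allA).
apply/esym/forallP => c; rewrite inE; apply: contra notall => fcA; apply/forallP => c'.
by have := @connected_lstable_mem _ _ c c' cC stB; rewrite !inE; apply.
Qed.

Definition mark (C : magma) (L : fsum) : int :=
  (\sum_(t <- L) t.1 * (#|embeddings C t.2|)%:Z)%R.

Lemma mark_cons C t L : mark C (t :: L) = (t.1 * (#|embeddings C t.2|)%:Z + mark C L)%R.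
Proof. exact: big_cons. Qed.

Lemma mark_cat C L1 L2 : mark C (L1 ++ L2) = (mark C L1 + mark C L2)%R.
Proof. exact: big_cat. Qed.

Lemma mark_fopp C L : mark C (fopp L) = (- mark C L)%R.
Proof. by rewrite /mark big_map -sumrN; apply: eq_bigr => t _; rewrite mulNr. Qed.

Lemma mark_beq C x y : connected C -> beq x y -> mark C x = mark C y.
Proof.
move=> cC; elim=> {x y} //.
- by move=> x y w _ -> _ ->.
- by move=> t x y _ xy; rewrite !mark_cons xy.
- by move=> x y w _ xy; rewrite !mark_cat xy.
- by move=> t s x; rewrite !mark_cons addrCA.
- by move=> z w Q x _; rewrite !mark_cons addrA mulrDl.
- by move=> Q x _; rewrite mark_cons mul0r add0r.
- by move=> z Q Q' x _ _ QQ'; rewrite !mark_cons (card_embeddings_iso C QQ').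
move=> z Q S T x [rQ _] _ _ /(decompP rQ) [A [stA -> ->]].
by rewrite !mark_cons addrA -mulrDr -PoszD -card_embeddings_split.
Qed.

(** * Decomposition into connected quandles *)

Lemma beq_empty z Q x : is_quandle Q -> #|mcar Q| = 0 -> beq ((z, Q) :: x) x.
Proof.
move=> qQ Q0; have st0 : lstable (set0 : {set mcar Q}) by move=> a y; rewrite inE.
have empty_msub A : #|mcar (@msub Q A)| = 0 by apply/eqP; rewrite card_msub -leqn0 -Q0 max_card.
apply: (fs_rel_self z x qQ _ _ (decomp_msub qQ.1 st0)); try exact: iso_empty.
  exact: quandle_msub.
exact: quandle_msub qQ (lstableC qQ.1 st0).
Qed.

Lemma nonconnected_split Q : is_rack Q -> 0 < #|mcar Q| -> ~ connected Q ->
  exists A : {set mcar Q}, [/\ lstable A, 0 < #|A| & #|A| < #|mcar Q|].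
Proof.
move=> rQ Q0 nconn; apply: NNPP => noA; apply/nconn/lstable_connected => // A stA.
apply: NNPP => Atriv; apply: noA; exists A; split=> //.
  by rewrite card_gt0; apply/eqP => A0; apply: Atriv; left.
by rewrite -cardsT proper_card // properT; apply/eqP => AT; apply: Atriv; right.
Qed.

Lemma beq_connected_summands z Q : is_quandle Q ->
  exists2 L, fvalid is_conquandle L & forall x, beq ((z, Q) :: x) (L ++ x).
Proof.
have [n] := ubnP #|mcar Q|; elim: n Q => // n IH Q; rewrite ltnS => Qn qQ.
have [cQ|ncQ] := classic (connected Q); first by exists [:: (z, Q)] => // x; exact: fs_refl.
have [Q0|Qpos] := posnP #|mcar Q|; first by exists [::] => // x; exact: beq_empty.
have [A [stA A0 AQ]] := nonconnected_split qQ.1 Qpos ncQ.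
have stC := lstableC qQ.1 stA.
have qA := quandle_msub qQ stA; have qC := quandle_msub qQ stC.
have ltA : #|mcar (msub A)| < n by rewrite card_msub; lia.
have ltC : #|mcar (msub (~: A))| < n by rewrite card_msub; have := cardsC A; lia.
have [LA vA hA] := IH _ ltA qA; have [LC vC hC] := IH _ ltC qC.
exists (LA ++ LC) => [|x]; first exact/fvalid_cat.
apply: fs_trans (fs_rel z x qQ qA qC (decomp_msub qQ.1 stA)) _.
by apply: fs_trans (hA _) _; rewrite -catA; exact/fs_catl/hC.
Qed.

Lemma beq_connected_sum x : fvalid is_quandle x -> exists2 L, fvalid is_conquandle L & beq x L.
Proof.
elim: x => [|[z Q] x IH] /= => [_|[qQ /IH [L vL xL]]]; first by exists [::] => //; exact: fs_refl.
have [LQ vQ hQ] := beq_connected_summands z qQ.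
by exists (LQ ++ L); [exact/fvalid_cat | apply: fs_trans (hQ x) _; exact: fs_catl].
Qed.

Lemma beq_of_zeq x y : zeq x y -> beq x y.
Proof. by apply: fs_eq_mono => // Q []. Qed.

(* For a largest summand D, only the summands isomorphic to D receive an embedding of D, so
   the mark at D is their total coefficient times #|embeddings D D| > 0. *)
Lemma zeq_nil_of_marks L : fvalid is_conquandle L ->
  (forall C, is_conquandle C -> mark C L = 0%R) -> zeq L [::].
Proof.
have [n] := ubnP (size L); elim: n L => // n IH.
case=> [|t0 L0] Ln vL marks0; first exact: fs_refl.
have [L1 [t [L2 [Lsplit large]]]] := fsum_largest (L := t0 :: L0) isT.
rewrite {}Lsplit in Ln vL marks0 large *.
set L' := L1 ++ L2; set D := t.2.
have /fvalid_cat_cons [cD vL'] := vL.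
have /fvalid_cat_cons [_ largeL'] := large.
pose p (s : int * magma) := 0 < #|embeddings D s.2|.
have merge_class : fvalid (fun Q => is_conquandle Q /\ iso Q D) (t :: filter p L').
  split; first by split=> //; exact: iso_refl.
  apply: fvalid_filter (fvalid_and vL' largeL') => s /card_gt0P [f fD] [cs le].
  by split=> //; apply/iso_sym/(embeddings_iso fD).
set S := (\sum_(s <- t :: filter p L') s.1)%R; set R := filter (predC p) L'.
have LSR : zeq (L1 ++ t :: L2) ((S, D) :: R).
  apply: fs_trans (fs_cat_cons _ _ _) _; apply: fs_trans (fs_cons t (fs_filterC p L')) _.
  exact: fs_cat R (fs_merge_iso cD merge_class).
have markR : mark D R = 0%R.
  by rewrite /mark big_filter big1 // => s; rewrite /= /p lt0n negbK => /eqP ->; rewrite mulr0.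
have S0 : S = 0%R.
  move: (marks0 D cD); rewrite (mark_beq cD.2 (beq_of_zeq LSR)) mark_cons markR addr0 /=.
  by move/eqP; rewrite mulf_eq0 eqz_nat gtn_eqF ?card_embeddings_gt0 // orbF => /eqP.
have LR : zeq (L1 ++ t :: L2) R by apply: fs_trans LSR _; rewrite S0; exact: fs_zero.
apply: (fs_trans LR (IH R _ _ _)).
- rewrite size_filter (leq_ltn_trans (count_size _ _)) //; move: Ln; rewrite !size_cat /=; lia.
- exact: fvalid_filter vL'.
by move=> C cC; rewrite -(mark_beq cC.2 (beq_of_zeq LR)); exact: marks0.
Qed.

Lemma zeq_of_beq x y : fvalid is_conquandle x -> fvalid is_conquandle y -> beq x y -> zeq x y.
Proof.
move=> vx vy xy; have xy0 : zeq (x ++ fopp y) [::].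
  apply: zeq_nil_of_marks => [|C cC]; first by apply/fvalid_cat; split; last exact: fvalid_fopp.
  by rewrite mark_cat mark_fopp (mark_beq cC.2 xy) subrr.
rewrite -[x]cats0; apply: fs_trans (fs_catl x (fs_sym (fs_foppl vy))) _.
by rewrite catA; exact: fs_cat y xy0.
Qed.

(** * Multiplicativity *)

Lemma beq_decomp_mprodl c Q S T B y : is_quandle Q -> is_quandle B -> decomp Q S T ->
  beq ((c, mprod Q B) :: y) ((c, mprod S B) :: (c, mprod T B) :: y).
Proof.
move=> qQ qB /(decompP qQ.1) [A [stA -> ->]]; have stC := lstableC qQ.1 stA.
have qQB := quandle_mprod qQ qB; have stA' := lstable_preim_fst (B := B) stA.
have qA' := quandle_msub qQB stA'; have qC' := quandle_msub qQB (lstableC qQB.1 stA').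
apply: fs_trans (fs_rel c y qQB qA' qC' (decomp_msub qQB.1 stA')) _.
have qAB := quandle_mprod (quandle_msub qQ stA) qB.
apply: fs_trans (fs_iso _ c _ qA' qAB (iso_sym (iso_msub_preim_fst B stA))) _.
have qCB := quandle_mprod (quandle_msub qQ stC) qB.
rewrite -preimsetC in qC' *; apply: fs_cons.
exact: fs_iso (iso_sym (iso_msub_preim_fst B stC)).
Qed.

Lemma beq_decomp_mprodr c Q S T B y : is_quandle Q -> is_quandle B -> decomp Q S T ->
  beq ((c, mprod B Q) :: y) ((c, mprod B S) :: (c, mprod B T) :: y).
Proof.
move=> qQ qB DQ; have [qS qT] := decomp_quandle qQ DQ.
have swap R : is_quandle R -> forall x, beq ((c, mprod B R) :: x) ((c, mprod R B) :: x).
  by move=> qR x; apply: fs_iso (iso_mprodC _ _); exact: quandle_mprod.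
apply: fs_trans (swap _ qQ _) _; apply: fs_trans (beq_decomp_mprodl c y qQ qB DQ) _.
apply: fs_trans (fs_sym (swap _ qS _)) _; apply: fs_cons; exact: fs_sym (swap _ qT _).
Qed.

Definition fscale (t : int * magma) (b : fsum) : fsum :=
  [seq ((t.1 * s.1)%R, mprod t.2 s.2) | s <- b].

Section FmulLeft.
Variable b : fsum.
Hypothesis vb : fvalid is_quandle b.

Lemma fscale_merge z w Q y : is_quandle Q ->
  beq (fscale (z, Q) b ++ fscale (w, Q) b ++ y) (fscale ((z + w)%R, Q) b ++ y).
Proof.
move=> qQ; elim: b vb => [|[c B] b' IH] /= => [_|[qB vb']]; first exact: fs_refl.
apply: fs_trans (fs_cons _ (fs_cat_cons _ _ _)) _.
by apply: fs_trans (fs_merge _ _ _ _ (quandle_mprod qQ qB)) _; rewrite -mulrDl; exact/fs_cons/IH.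
Qed.

Lemma fscale_zero Q y : is_quandle Q -> beq (fscale (0%R, Q) b ++ y) y.
Proof.
move=> qQ; elim: b vb => [|[c B] b' IH] /= => [_|[qB vb']]; first exact: fs_refl.
by rewrite mul0r; apply: fs_trans (fs_zero _ _ (quandle_mprod qQ qB)) _; exact: IH.
Qed.

Lemma fscale_iso z Q Q' : is_quandle Q -> is_quandle Q' -> iso Q Q' ->
  beq (fscale (z, Q) b) (fscale (z, Q') b).
Proof.
move=> qQ qQ' QQ'; elim: b vb => [|[c B] b' IH] /= => [_|[qB vb']]; first exact: fs_refl.
apply: fs_trans (fs_cons _ (IH vb')) _.
by apply: fs_iso (iso_mprodl _ QQ'); exact: quandle_mprod.
Qed.

Lemma fscale_decomp z Q S T : is_quandle Q -> decomp Q S T ->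
  beq (fscale (z, Q) b) (fscale (z, S) b ++ fscale (z, T) b).
Proof.
move=> qQ DQ; elim: b vb => [|[c B] b' IH] /= => [_|[qB vb']]; first exact: fs_refl.
apply: fs_trans (beq_decomp_mprodl _ _ qQ qB DQ) _; apply/fs_cons.
by apply: fs_trans (fs_cons _ (IH vb')) _; apply: fs_sym; exact: fs_cat_cons.
Qed.

Lemma beq_fmull a a' : beq a a' -> beq (fmul a b) (fmul a' b).
Proof.
apply: (fs_flatten_map (h := fscale^~ b)) => [z w Q y|Q y|z Q Q'|z Q S T qQ _ _].
- exact: fscale_merge.
- exact: fscale_zero.
- exact: fscale_iso.
- exact: fscale_decomp.
Qed.

End FmulLeft.

Lemma beq_fscale t a a' : is_quandle t.2 -> beq a a' -> beq (fscale t a) (fscale t a').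
Proof.
case: t => c B /= qB.
have fscaleE x : fscale (c, B) x = flatten [seq [:: ((c * s.1)%R, mprod B s.2)] | s <- x].
  by elim: x => //= s x ->.
rewrite !fscaleE; apply: fs_flatten_map => [z w Q y qQ|Q y qQ|z Q Q' qQ qQ' QQ'|z Q S T qQ _ _] /=.
- by rewrite mulrDr; apply: fs_merge; exact: quandle_mprod.
- by rewrite mulr0; apply: fs_zero; exact: quandle_mprod.
- by apply: fs_iso (iso_mprodr _ QQ'); exact: quandle_mprod.
exact: beq_decomp_mprodr.
Qed.

Lemma beq_fmulr b a a' : fvalid is_quandle b -> beq a a' -> beq (fmul b a) (fmul b a').
Proof.
elim: b => [|t b IH] /= => [_ _|[qt vb] aa']; first exact: fs_refl.
by apply: fs_cat2; [exact: beq_fscale | exact: IH].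
Qed.

Lemma connected_form_exists x :
  exists L, fvalid is_quandle x -> fvalid is_conquandle L /\ beq x L.
Proof.
have [vx|nvx] := classic (fvalid is_quandle x); last by exists [::].
by have [L vL xL] := beq_connected_sum vx; exists L.
Qed.

(* Junk value when [x] is not a formal sum of quandles. *)
Definition connected_form (x : fsum) : fsum :=
  proj1_sig (constructive_indefinite_description _ (connected_form_exists x)).

Lemma connected_formP x : fvalid is_quandle x ->
  fvalid is_conquandle (connected_form x) /\ beq x (connected_form x).
Proof. by rewrite /connected_form; case: constructive_indefinite_description. Qed.

Lemma zeq_connected_form x y : fvalid is_quandle x -> fvalid is_conquandle y -> beq x y ->
  zeq (connected_form x) y.
Proof.
move=> vx vy xy; have [vFx xFx] := connected_formP vx.
by apply: zeq_of_beq vFx vy _; exact: fs_trans (fs_sym xFx) xy.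
Qed.

Theorem theorem7p4 :
  exists F : fsum -> fsum,
  (* F sends formal sums of finite quandles to formal sums of finite connected quandles *)
     (forall x, fvalid is_quandle x -> fvalid is_conquandle (F x))
  (* F is well defined on B(Q) *)
  /\ (forall x y, fvalid is_quandle x -> fvalid is_quandle y ->
         beq x y -> zeq (F x) (F y))
  (* additive *)
  /\ (forall x y, fvalid is_quandle x -> fvalid is_quandle y ->
         zeq (F (x ++ y)) (F x ++ F y))
  (* multiplicative and unital *)
  /\ (forall x y, fvalid is_quandle x -> fvalid is_quandle y ->
         zeq (F (fmul x y)) (fmul (F x) (F y)))
  /\ zeq (F fone) fone
  (* injective on B(Q) *)
  /\ (forall x y, fvalid is_quandle x -> fvalid is_quandle y ->
         zeq (F x) (F y) -> beq x y)
  (* surjective onto Z{Q_con} *)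
  /\ (forall y, fvalid is_conquandle y ->
         exists2 x, fvalid is_quandle x & zeq (F x) y)
  (* b(Q) |-> [Q] for connected Q *)
  /\ (forall Q, is_quandle Q -> connected Q ->
         zeq (F [:: (1%R, Q)]) [:: (1%R, Q)]).
Proof.
have F_valid x : fvalid is_quandle x -> fvalid is_conquandle (connected_form x).
  by move=> /connected_formP [].
have F_beq x : fvalid is_quandle x -> beq x (connected_form x) by move=> /connected_formP [].
have F_id y : fvalid is_conquandle y -> zeq (connected_form y) y.
  by move=> vy; apply: zeq_connected_form (fvalid_conquandle_quandle vy) vy _; exact: fs_refl.
exists connected_form; split; first exact: F_valid.
split=> [x y vx vy xy|].
  exact: zeq_connected_form vx (F_valid _ vy) (fs_trans xy (F_beq _ vy)).
split=> [x y vx vy|].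
  apply: zeq_connected_form; first exact/fvalid_cat.
  - by apply/fvalid_cat; split; exact: F_valid.
  - exact: fs_cat2 (F_beq _ vx) (F_beq _ vy).
split=> [x y vx vy|].
  apply: zeq_connected_form.
  - by apply: fvalid_fmul vx vy => Q R; exact: quandle_mprod.
  - by apply: fvalid_fmul (F_valid _ vx) (F_valid _ vy) => Q R; exact: conquandle_mprod.
  apply: fs_trans (beq_fmull vy (F_beq _ vx)) _.
  exact: beq_fmulr (fvalid_conquandle_quandle (F_valid _ vx)) (F_beq _ vy).
split; first by apply: F_id; split=> //; split; [exact: quandle_munit | exact: connected_munit].
split=> [x y vx vy /beq_of_zeq FxFy|].
  exact: fs_trans (F_beq _ vx) (fs_trans FxFy (fs_sym (F_beq _ vy))).
split=> [y vy|Q qQ cQ]; last exact: F_id.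
by exists y; [exact: fvalid_conquandle_quandle | exact: F_id].
Qed.
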